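(* Let $\mathcal I=\mathbb R^d$, let $\mathcal G$ be a compact Abelian group with normalized Haar measure $dg$ acting on $\mathcal I$ by a unitary representation, and let $\mathcal G_0\subset\mathcal G$ be measurable with $V=\int_{\mathcal G_0}dg>0$. For $I\in\mathcal I$ and $\bar g\in\mathcal G$ let $Z_{I,\bar g}:\bar g\mathcal G_0\to\mathcal I$, $Z_{I,\bar g}(g)=gI$, and let $\rho_{I,\bar g}(A)=\frac1V\int_{Z_{I,\bar g}^{-1}(A)}dg$ for measurable $A\subset\mathcal I$. Define $\bar P(I):\mathcal G\to\mathcal P(\mathcal I)$ by $\bar P(I)(g)=\rho_{I,g}$, and let $\mathcal G$ act on such maps by $(\tilde g\bar P(I))(g)=\bar P(I)(\tilde gg)$. Then for all $I,I'\in\mathcal I$: if $I\sim I'$, there exists $\tilde g\in\mathcal G$ such that $\bar P(I')=\tilde g\bar P(I)$. Equivalently, if $I'=\tilde gI$ then $\bar P(I')(g)=\bar P(I)(g\tilde g)$ for all $g\in\mathcal G$ (i.e. $\bar P$ is covariant).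
   Context: $\bar g\mathcal G_0=\{\bar g g': g'\in\mathcal G_0\}$. $\mathcal P(\mathcal I)$ is the set of Borel probability measures on $\mathcal I$. $I\sim I'$ means there exists $g\in\mathcal G$ with $gI=I'$. *)

From HB Require Import structures.
From mathcomp Require Import all_boot all_order all_algebra.
From mathcomp Require Import all_classical all_reals all_analysis.
Set Implicit Arguments. Unset Strict Implicit. Unset Printing Implicit Defensive.
Import Order.TTheory GRing.Theory Num.Theory.
Import numFieldNormedType.Exports.
Local Open Scope classical_set_scope.
Local Open Scope ring_scope.

Definition borelT (T : ptopologicalType) := g_sigma_algebraType (@open T).

(* A topological abelian group viewed as a pointed topological space
   (base point 0), so that its Borel sigma-algebra can be formed. *)
Definition zpt (T : topologicalZmodType) : Type := T.
HB.instance Definition _ (T : topologicalZmodType) :=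
  TopologicalZmodule.on (zpt T).
HB.instance Definition _ (T : topologicalZmodType) :=
  isPointed.Build (zpt T) 0%R.

Section Covariance.
Variables (R : realType) (d : nat) (G : topologicalZmodType).
Variables (haar : probability (borelT (zpt G)) R) (rep : G -> 'M[R]_d)
          (G0 : set G).

(* \bar g G0 (group written additively, G abelian) *)
Definition transl (gbar : G) (S : set G) : set G := (fun g' => gbar + g') @` S.

Definition gact (g : G) (I : 'cV[R]_d) : 'cV[R]_d := rep g *m I.

Definition Zpre (I : 'cV[R]_d) (gbar : G) (A : set 'cV[R]_d) : set G :=
  [set g | transl gbar G0 g /\ A (gact g I)].

Definition Vol : R := fine (haar G0).

Definition rho (I : 'cV[R]_d) (gbar : G) (A : set 'cV[R]_d) : R :=
  fine (haar (Zpre I gbar A)) / Vol.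

Definition Pbar (I : 'cV[R]_d) : G -> set 'cV[R]_d -> R := fun g => rho I g.

Definition Pact (gt : G) (P : G -> set 'cV[R]_d -> R) : G -> set 'cV[R]_d -> R :=
  fun g => P (gt + g).

Definition orbit_rel (I I' : 'cV[R]_d) : Prop := exists g : G, gact g I = I'.
End Covariance.

From HB Require Import structures.
From mathcomp Require Import all_boot all_order all_algebra.
From mathcomp Require Import all_classical all_reals all_analysis.
Import Order.TTheory GRing.Theory Num.Theory.
Import numFieldNormedType.Exports.
Local Open Scope classical_set_scope.
Local Open Scope ring_scope.

(* Covariance comes from [(g + gt) I = g (gt I)]: the window
   [Z_{I, g + gt}^{-1}(A)] is the translate by [gt] of [Z_{gt I, g}^{-1}(A)],
   so the two have the same Haar measure.  Measurability of these windows
   follows from continuity of translations and of [g |-> g I]. *)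

Lemma measurable_preimage_continuous (T U : ptopologicalType) (f : T -> U) :
  continuous f -> forall A : set U, measurable (A : set (borelT U)) ->
  measurable ((f @^-1` A) : set (borelT T)).
Proof.
move=> cf A mA.
have := @measurability _ _ (borelT T) (borelT U) setT f (@open U) erefl.
move=> /(_ _ measurableT A mA); rewrite setTI; apply.
move=> _ [B oB <-]; rewrite setTI; apply: sub_sigma_algebra.
by apply: open_comp => // x _; exact: cf.
Qed.

Lemma continuous_subr (G : topologicalZmodType) (g : G) :
  continuous (fun h : G => h - g).
Proof.
move=> x.
apply: (@continuous_comp _ _ _ (fun h : G => (h, g)) (fun p : G * G => p.1 - p.2)).
  by apply: cvg_pair => //; exact: cvg_cst.
exact: sub_continuous.
Qed.

Lemma translE (G : topologicalZmodType) (g : G) (S : set G) :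
  transl g S = (fun h => h - g) @^-1` S.
Proof.
apply/seteqP; split => h /=; first by move=> [h' Sh' <-]; rewrite addrC addKr.
by move=> Sh; exists (h - g) => //; rewrite addrC subrK.
Qed.

Section Covariance.
Variables (R : realType) (d : nat) (G : topologicalZmodType).
Variables (haar : probability (borelT (zpt G)) R) (rep : G -> 'M[R]_d)
          (G0 : set G).

Hypothesis rep_continuous : forall I : 'cV[R]_d, continuous (fun g : G => rep g *m I).
Hypothesis G0_measurable : measurable (G0 : set (borelT (zpt G))).

Lemma measurable_Zpre (I : 'cV[R]_d) (g : G) (A : set 'cV[R]_d) :
  measurable (A : set (borelT 'cV[R]_d)) ->
  measurable (Zpre rep G0 I g A : set (borelT (zpt G))).
Proof.
move=> mA; rewrite /Zpre translE; apply: measurableI.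
  exact: (@measurable_preimage_continuous (zpt G) (zpt G) _ (@continuous_subr (zpt G) g)).
exact: (@measurable_preimage_continuous (zpt G) _ _ (rep_continuous I)).
Qed.

Hypothesis rep_hom : forall g h : G, rep (g + h) = rep g *m rep h.

Lemma gactD (g h : G) (I : 'cV[R]_d) : gact rep (g + h) I = gact rep g (gact rep h I).
Proof. by rewrite /gact rep_hom mulmxA. Qed.

Lemma Zpre_gact (I : 'cV[R]_d) (gt g : G) (A : set 'cV[R]_d) :
  Zpre rep G0 I (g + gt) A = transl gt (Zpre rep G0 (gact rep gt I) g A).
Proof.
rewrite /Zpre !translE; apply/seteqP; split => k /=;
  by rewrite -gactD subrK opprD addrA addrAC.
Qed.

Hypothesis haar_invariant : forall (g : G) (S : set G),
  measurable (S : set (borelT (zpt G))) -> haar (transl g S) = haar S.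

Lemma Pbar_gact (I : 'cV[R]_d) (gt g : G) (A : set 'cV[R]_d) :
  measurable (A : set (borelT 'cV[R]_d)) ->
  Pbar haar rep G0 (gact rep gt I) g A = Pbar haar rep G0 I (g + gt) A.
Proof.
by move=> mA; rewrite /Pbar /rho Zpre_gact haar_invariant //; exact: measurable_Zpre.
Qed.

End Covariance.

Theorem theorem8 (R : realType) (d : nat) (G : topologicalZmodType)
  (G_compact : compact [set: G])
  (haar : probability (borelT (zpt G)) R)
  (haar_invariant : forall (g : G) (S : set G),
     measurable (S : set (borelT (zpt G))) ->
     haar (transl g S) = haar S)
  (rep : G -> 'M[R]_d)
  (rep_hom : forall g h : G, rep (g + h) = rep g *m rep h)
  (rep_unit : rep 0 = 1%:M)
  (rep_unitary : forall g : G, rep g *m (rep g)^T = 1%:M)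
  (rep_continuous : forall I : 'cV[R]_d, continuous (fun g : G => rep g *m I))
  (G0 : set G) (G0_measurable : measurable (G0 : set (borelT (zpt G))))
  (V_pos : (0 < haar G0)%E) :
  (forall I I' : 'cV[R]_d, orbit_rel rep I I' ->
     exists gt : G, forall (g : G) (A : set 'cV[R]_d),
       measurable (A : set (borelT 'cV[R]_d)) ->
       Pbar haar rep G0 I' g A = Pact gt (Pbar haar rep G0 I) g A)
  /\
  (forall (I : 'cV[R]_d) (gt : G) (g : G) (A : set 'cV[R]_d),
       measurable (A : set (borelT 'cV[R]_d)) ->
       Pbar haar rep G0 (gact rep gt I) g A = Pbar haar rep G0 I (g + gt) A).
Proof.
have covariant : forall (I : 'cV[R]_d) (gt g : G) (A : set 'cV[R]_d),
    measurable (A : set (borelT 'cV[R]_d)) ->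
    Pbar haar rep G0 (gact rep gt I) g A = Pbar haar rep G0 I (g + gt) A.
  exact: Pbar_gact.
split=> // I _ [gt <-]; exists gt => g A mA.
by rewrite covariant // /Pact addrC.
Qed.
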